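(* For every integer $k\ge1$, let $W_k(x)=\sum_{n\ge1}w_{n,k}x^n$, where $w_{n,k}$ is the number of un-ordered rooted binary trees $t$ with $n$ leaves and $\gamma(t)\le k$. Then $$W_k(x)=x+\frac12W_k(x)^2+\frac12W_k(x^2)-x^{k+1},$$ and hence $$W_k(x)=1-\sqrt{1-2\varphi_k(x)},\qquad \varphi_k(x)=x+\frac{W_k(x^2)}{2}-x^{k+1}.$$
   Context: An un-ordered rooted binary tree is a rooted tree in which every internal node has exactly two children, with no order on the children (trees are considered up to isomorphism); its size is its number of leaves. A tree is a caterpillar if every node is either a leaf or has at least one leaf among its direct children. The subtree of $t$ at a node $v$ consists of $v$ and all its descendants, and $\gamma(t)$ is the largest number of leaves of a caterpillar occurring as the subtree of $t$ at some node. *)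

From mathcomp Require Import all_boot all_order all_algebra.
Set Implicit Arguments. Unset Strict Implicit. Unset Printing Implicit Defensive.
Import Order.TTheory GRing.Theory Num.Theory.

Inductive tree : Type := Leaf | Node of tree & tree.

Fixpoint leaves (t : tree) : nat :=
  match t with Leaf => 1 | Node l r => leaves l + leaves r end.

(* isomorphism of un-ordered rooted binary trees: children may be swapped *)
Fixpoint tree_iso (t u : tree) : bool :=
  match t, u with
  | Leaf, Leaf => true
  | Node a b, Node c d => (tree_iso a c && tree_iso b d) || (tree_iso a d && tree_iso b c)
  | _, _ => false
  end.

Definition is_leaf (t : tree) : bool := if t is Leaf then true else false.

Fixpoint caterpillar (t : tree) : bool :=
  match t with
  | Leaf => true
  | Node l r => [&& is_leaf l || is_leaf r, caterpillar l & caterpillar r]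
  end.

Fixpoint subtrees (t : tree) : seq tree :=
  t :: (match t with Leaf => [::] | Node l r => subtrees l ++ subtrees r end).

Definition gamma (t : tree) : nat :=
  \max_(s <- subtrees t | caterpillar s) leaves s.

Fixpoint enum_trees (fuel n : nat) : seq tree :=
  match fuel with
  | 0 => [::]
  | f.+1 =>
      if n == 1 then [:: Leaf] else
      flatten [seq flatten [seq [seq Node l r | r <- enum_trees f (n - i)]
                           | l <- enum_trees f i]
              | i <- iota 1 n.-1]
  end.

Definition trees_with_leaves (n : nat) : seq tree := enum_trees n n.

Definition iso_classes (s : seq tree) : nat :=
  size (foldl (fun acc t => if has (tree_iso t) acc then acc else rcons acc t) [::] s).

Definition w (n k : nat) : nat :=
  iso_classes [seq t <- trees_with_leaves n | gamma t <= k].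

Local Open Scope ring_scope.
Definition fps := nat -> rat.
Definition fps_add (f g : fps) : fps := fun n => f n + g n.
Definition fps_sub (f g : fps) : fps := fun n => f n - g n.
Definition fps_scale (c : rat) (f : fps) : fps := fun n => c * f n.
Definition fps_mul (f g : fps) : fps := fun n => \sum_(i < n.+1) f i * g (n - i)%N.
Definition fps_Xn (m : nat) : fps := fun n => (n == m)%:R.
Definition fps_one : fps := fps_Xn 0.
Definition fps_x2 (f : fps) : fps := fun n => if odd n then 0 else f n./2.
Definition is_fps_sqrt (s f : fps) : Prop := s 0%N = 1 /\ forall n, fps_mul s s n = f n.

(* W_k(x) = sum_{n>=1} w_{n,k} x^n  (w 0 k = 0) *)
Definition W (k : nat) : fps := fun n => (w n k)%:R.
Definition phi (k : nat) : fps :=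
  fps_sub (fps_add (fps_Xn 1) (fps_scale (2%:R)^-1 (fps_x2 (W k)))) (fps_Xn k.+1).

From HB Require Import structures.
From mathcomp Require Import all_boot all_order all_algebra.
From mathcomp Require Import zify lra.

Set Implicit Arguments.
Unset Strict Implicit.
Unset Printing Implicit Defensive.

(* Un-ordered trees are counted through canonical plane representatives.
   Trees are made a countable type; a tree is canonical when the children of
   each node are canonical and ordered by their codes (pickle), and [canon t]
   is the canonical form of t.  Isomorphism is equality of canonical forms,
   so [w n k] is the number of canonical trees with n leaves and gamma <= k.

   For trees, the canonical trees with n >= 2 leaves and gamma <= k are the
   code-sorted nodes ("candidates") whose children have gamma <= k, minus the
   candidates that are caterpillars with more than k leaves; there is one such
   (the spine with k+1 leaves) when n = k+1 and none otherwise.  Hence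
     2 w_n + 2 [n = k+1] = sum_{0<i<n} w_i w_{n-i} + [n even] w_{n/2},
   which is W = x + W^2/2 + W(x^2)/2 - x^{k+1} coefficient by coefficient.
   Finally the quadratic is solved formally: if f(0) = 0 and f = g + f^2/2
   then (1 - f)^2 = 1 - 2g, and for f = W_k the series g is phi_k. *)

(* The codes of a countable type are injective, so comparing codes is a total
   order that picks a representative ordering of each unordered pair. *)
Lemma pickle_inj (T : countType) : injective (@pickle T).
Proof. exact: pcan_inj pickleK. Qed.

Lemma sum_const_seq (I : Type) (s : seq I) (c : nat) : \sum_(x <- s) c = (size s * c)%N.
Proof. by rewrite big_const_seq count_predT iter_addn_0 mulnC. Qed.

Lemma size_flatten_map (S U : Type) (B : S -> seq U) s :
  size (flatten [seq B x | x <- s]) = \sum_(x <- s) size (B x).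
Proof. by elim: s => [|x s IH]; rewrite ?big_nil ?big_cons //= size_cat IH. Qed.

Lemma uniq_flatten_key (S U : eqType) (key : U -> S) (s : seq S) (B : S -> seq U) :
  uniq s -> (forall i, uniq (B i)) -> (forall i x, x \in B i -> key x = i) ->
  uniq (flatten [seq B i | i <- s]).
Proof.
move=> + B_uniq B_key; elim: s => [|i s IH] //= /andP [i_notin s_uniq].
rewrite cat_uniq B_uniq IH // andbT; apply/hasPn => x /flatten_mapP [j j_in x_j].
apply/negP => x_i; move: (B_key _ _ x_i) (B_key _ _ x_j) => -> i_j.
by rewrite i_j j_in in i_notin.
Qed.

(* Deduplicating a list up to an equivalence given by a key: the left fold
   used by [iso_classes] keeps exactly one element per key. *)
Section DedupByKey.
Variables (T K : eqType) (key : T -> K) (e : rel T).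
Hypothesis e_key : forall t u, e t u = (key t == key u).

Definition dedup_step (acc : seq T) (t : T) : seq T :=
  if has (e t) acc then acc else rcons acc t.

Lemma dedup_fold_inv s acc : uniq (map key acc) ->
  uniq (map key (foldl dedup_step acc s)) /\
  map key (foldl dedup_step acc s) =i map key acc ++ map key s.
Proof.
elim: s acc => [|t s IH] acc acc_uniq /=; first by split => // x; rewrite cats0.
have hasE : has (e t) acc = (key t \in map key acc).
  apply/hasP/mapP => [[x xa]|[x xa kx]]; first by rewrite e_key => /eqP ->; exists x.
  by exists x; rewrite // e_key kx.
have step_uniq : uniq (map key (dedup_step acc t)).
  by rewrite /dedup_step hasE; case: ifP => // kt; rewrite map_rcons rcons_uniq kt.
have [{}IH IHmem] := IH _ step_uniq; split => // x.
rewrite IHmem /dedup_step hasE; case: ifP => kt; last by rewrite map_rcons -cats1 -catA.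
rewrite !mem_cat inE; case: (eqVneq x (key t)) => [->|//]; by rewrite kt.
Qed.

Lemma dedup_fold_size s :
  size (foldl dedup_step [::] s) = size (undup (map key s)).
Proof.
have [fold_uniq fold_mem] := @dedup_fold_inv s [::] isT.
rewrite -(size_map key); apply/perm_size/uniq_perm; rewrite ?undup_uniq //.
by move=> x; rewrite fold_mem mem_undup.
Qed.

End DedupByKey.

(* Counting unordered pairs through the order of codes: for families [F i] of
   distinct objects of size i, the pairs (l, r) with l in F i, r in F (n - i)
   and code l <= code r, counted twice, are all the pairs plus the diagonal
   pairs l = r (which occur only for i = n/2). *)
Section UnorderedPairs.
Variables (T : countType) (F : nat -> seq T) (size_of : T -> nat).
Hypothesis F_uniq : forall i, uniq (F i).
Hypothesis F_size : forall i x, x \in F i -> size_of x = i.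

Definition sorted_pairs (n : nat) : nat :=
  \sum_(1 <= i < n) \sum_(l <- F i) \sum_(r <- F (n - i)) (pickle l <= pickle r : nat).

Lemma sorted_pairs_swap n : sorted_pairs n =
  \sum_(1 <= i < n) \sum_(l <- F i) \sum_(r <- F (n - i)) (pickle r <= pickle l : nat).
Proof.
rewrite /sorted_pairs big_nat_rev /=; apply: eq_big_nat => i /andP [i_ge1 i_lt].
rewrite exchange_big /=.
have -> : (1 + n - i.+1 = n - i)%N by lia.
by have -> : (n - (n - i) = i)%N by lia.
Qed.

(* Only the middle index i = n/2 contributes common elements of F i and F (n - i). *)
Lemma diagonal_pairs n : (0 < n)%N ->
  \sum_(1 <= i < n) \sum_(l <- F i) (l \in F (n - i) : nat) =
  if odd n then 0%N else size (F n./2).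
Proof.
move=> n_gt0.
have diag i : \sum_(l <- F i) (l \in F (n - i) : nat) =
              if i == n - i then size (F i) else 0%N.
  case: eqP => [<-|i_neq]; first by rewrite -sum1_size; apply: eq_big_seq => l ->.
  rewrite big1_seq // => l /andP [_ l_i]; case l_ni: (l \in F (n - i)) => //.
  by have := F_size l_i; have := F_size l_ni; lia.
under eq_bigr => i _ do rewrite diag.
case: ifP => n_odd.
  rewrite big1 // => i _; case: eqP => // i_half.
  have n_double : n = (i * 2)%N by lia.
  by move: n_odd; rewrite n_double oddM andbF.
have n_even : n = (n./2 * 2)%N by rewrite -[LHS](odd_double_half n) n_odd -muln2.
rewrite (bigD1_seq n./2) /= ?iota_uniq ?mem_index_iota //; last lia.
rewrite big1 ?addn0 => [|i i_neq]; first by rewrite ifT //; apply/eqP; lia.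
by case: eqP => // i_half; case/eqP: i_neq; lia.
Qed.

(* Each unordered pair {l, r} with l <> r is sorted one way exactly; the
   pairs l = r are counted once by each orientation. *)
Lemma sorted_pairs_double n : (0 < n)%N ->
  (2 * sorted_pairs n =
   \sum_(1 <= i < n) size (F i) * size (F (n - i)) +
   (if odd n then 0 else size (F n./2)))%N.
Proof.
move=> n_gt0; rewrite -(diagonal_pairs n_gt0) -big_split /=.
rewrite mul2n -addnn {2}sorted_pairs_swap -big_split /=.
apply: eq_bigr => i _; rewrite -big_split -sum_const_seq -big_split /=.
apply: eq_bigr => l _; rewrite -big_split /=.
have le_ge r : ((pickle l <= pickle r) + (pickle r <= pickle l) = 1 + (r == l))%N.
  by rewrite -(inj_eq (@pickle_inj T)); case: ltngtP => // ->; rewrite eqxx.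
under eq_bigr => r _ do rewrite le_ge.
by rewrite big_split /= sum_const_seq muln1 -big_mkcond /= sum1_count count_uniq_mem.
Qed.

End UnorderedPairs.

Fixpoint tree_enc (t : tree) : GenTree.tree unit :=
  match t with
  | Leaf => GenTree.Leaf tt
  | Node l r => GenTree.Node 0 [:: tree_enc l; tree_enc r]
  end.

Fixpoint tree_dec (g : GenTree.tree unit) : option tree :=
  match g with
  | GenTree.Leaf _ => Some Leaf
  | GenTree.Node _ [:: a; b] =>
      if (tree_dec a, tree_dec b) is (Some l, Some r) then Some (Node l r) else None
  | _ => None
  end.

Lemma tree_encK : pcancel tree_enc tree_dec.
Proof. by elim=> [|l IHl r IHr] //=; rewrite IHl IHr. Qed.

HB.instance Definition _ := Countable.copy tree (pcan_type tree_encK).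

Lemma eq_Node a b c d : (Node a b == Node c d) = (a == c) && (b == d).
Proof. by apply/eqP/andP => [[-> ->]|[/eqP -> /eqP ->]]. Qed.

Definition mkNode (a b : tree) : tree :=
  if (pickle a <= pickle b)%N then Node a b else Node b a.

Lemma mkNode_cases a b : mkNode a b = Node a b \/ mkNode a b = Node b a.
Proof. by rewrite /mkNode; case: ifP; [left|right]. Qed.

Lemma mkNode_Node a b : exists x y, mkNode a b = Node x y.
Proof. by case: (mkNode_cases a b) => ->; eauto. Qed.

Lemma mkNodeC a b : mkNode a b = mkNode b a.
Proof.
by rewrite /mkNode; case: (ltngtP (pickle a) (pickle b)) => // /(@pickle_inj tree) ->.
Qed.

Lemma eq_mkNode a b c d :
  (mkNode a b == mkNode c d) = ((a == c) && (b == d)) || ((a == d) && (b == c)).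
Proof.
rewrite /mkNode; case: ifP => ab_sorted; case: ifP => cd_sorted;
  rewrite eq_Node -!(inj_eq (@pickle_inj tree)); move: ab_sorted cd_sorted;
  set pa := pickle a; set pb := pickle b; set pc := pickle c; set pd := pickle d;
  do ![case: eqP => ? //=]; lia.
Qed.

Fixpoint canon (t : tree) : tree :=
  if t is Node l r then mkNode (canon l) (canon r) else Leaf.

Lemma tree_isoE t u : tree_iso t u = (canon t == canon u).
Proof.
elim: t u => [|a IHa b IHb] [|c d] //=.
- by have [x [y ->]] := mkNode_Node (canon c) (canon d).
- by have [x [y ->]] := mkNode_Node (canon a) (canon b).
- by rewrite eq_mkNode !IHa !IHb.
Qed.

Lemma iso_classesE s : iso_classes s = size (undup (map canon s)).
Proof. exact: (dedup_fold_size tree_isoE). Qed.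

Fixpoint canonical (t : tree) : bool :=
  if t is Node l r then [&& canonical l, canonical r & (pickle l <= pickle r)%N]
  else true.

Lemma canon_canonical t : canonical (canon t).
Proof.
elim: t => //= l IHl r IHr; rewrite /mkNode; case: ifP => /= h; rewrite IHl IHr //=.
by rewrite ltnW // ltnNge h.
Qed.

Lemma canonicalK t : canonical t -> canon t = t.
Proof. by elim: t => //= l IHl r IHr /and3P [/IHl -> /IHr -> h]; rewrite /mkNode h. Qed.

Lemma leaves_gt0 t : (0 < leaves t)%N.
Proof. by elim: t => //= l IHl r IHr; rewrite addn_gt0 IHl. Qed.

Lemma mem_enum_trees f n t : (n <= f)%N -> (t \in enum_trees f n) = (leaves t == n).
Proof.
elim: f n t => [|f IH] n t n_le.
  by move: n_le (leaves_gt0 t); rewrite leqn0 => /eqP ->; case: (leaves t).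
rewrite /=; case: ifP => [/eqP ->|n_neq1].
  rewrite inE; case: t => [|l r] //=.
  have -> : (Node l r == Leaf) = false by apply/eqP.
  by have := leaves_gt0 l; have := leaves_gt0 r; lia.
apply/flatten_mapP/idP => [[i]|].
  rewrite mem_iota => i_range /flatten_mapP [l]; rewrite IH; last by lia.
  move=> /eqP l_i /mapP [r]; rewrite IH; last by lia.
  by move=> /eqP r_ni ->; rewrite /= l_i r_ni; apply/eqP; lia.
case: t => [|l r] /=; first by move=> /eqP n1; rewrite -n1 in n_neq1.
have := leaves_gt0 l; have := leaves_gt0 r => r_gt0 l_gt0 /eqP lr_n.
exists (leaves l); first by rewrite mem_iota; lia.
apply/flatten_mapP; exists l; first by rewrite IH //; lia.
by apply/mapP; exists r; rewrite // IH; apply/eqP; lia.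
Qed.

Lemma gamma_Leaf : gamma Leaf = 1%N.
Proof. by rewrite /gamma /= big_cons big_nil. Qed.

Lemma gamma_Node l r : gamma (Node l r) =
  maxn (if caterpillar (Node l r) then leaves (Node l r) else 0%N)
       (maxn (gamma l) (gamma r)).
Proof.
rewrite /gamma [subtrees _]/= big_cons big_cat /=.
by case: ifP => _ //; rewrite max0n.
Qed.

Lemma gamma_le_leaves t : (gamma t <= leaves t)%N.
Proof.
elim: t => [|l IHl r IHr]; first by rewrite gamma_Leaf.
rewrite gamma_Node !geq_max /=; apply/and3P; split; first by case: ifP.
- exact: leq_trans IHl (leq_addr _ _).
- exact: leq_trans IHr (leq_addl _ _).
Qed.

Lemma gamma_caterpillar t : caterpillar t -> gamma t = leaves t.
Proof.
case: t => [|l r] cat_t; first by rewrite gamma_Leaf.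
by apply/eqP; rewrite eqn_leq gamma_le_leaves gamma_Node cat_t leq_max leqnn.
Qed.

Lemma canon_invariants t :
  [/\ leaves (canon t) = leaves t, is_leaf (canon t) = is_leaf t,
      caterpillar (canon t) = caterpillar t & gamma (canon t) = gamma t].
Proof.
elim: t => [|l [Ll Il Cl Gl] r [Lr Ir Cr Gr]] //=.
case: (mkNode_cases (canon l) (canon r)) => ->;
  rewrite !gamma_Node /= Ll Lr Il Ir Cl Cr Gl Gr //.
by rewrite addnC orbC (andbC (caterpillar r)) (maxnC (gamma r)).
Qed.

Definition reps (k n : nat) : seq tree :=
  undup (map canon [seq t <- trees_with_leaves n | (gamma t <= k)%N]).

Lemma w_reps n k : w n k = size (reps k n).
Proof. by rewrite /w iso_classesE. Qed.

Lemma mem_reps k n c :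
  (c \in reps k n) = [&& canonical c, leaves c == n & (gamma c <= k)%N].
Proof.
rewrite mem_undup; apply/mapP/idP => [[t]|/and3P [c_can c_n c_k]].
  rewrite mem_filter mem_enum_trees // => /andP [t_k t_n] ->.
  by have [-> _ _ ->] := canon_invariants t; rewrite canon_canonical t_n t_k.
by exists c; rewrite ?canonicalK // mem_filter mem_enum_trees // c_n c_k.
Qed.

Lemma reps_uniq k n : uniq (reps k n).
Proof. exact: undup_uniq. Qed.

Lemma reps_leaves k n c : c \in reps k n -> leaves c = n.
Proof. by rewrite mem_reps => /and3P [_ /eqP]. Qed.

Definition candidates (k n : nat) : seq tree :=
  flatten [seq flatten [seq [seq Node l r | r <- reps k (n - i) & (pickle l <= pickle r)%N]
                        | l <- reps k i]
          | i <- index_iota 1 n].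

Definition children_ok (k : nat) (t : tree) : bool :=
  if t is Node l r then (gamma l <= k)%N && (gamma r <= k)%N else false.

Lemma candidates_uniq k n : uniq (candidates k n).
Proof.
apply: (@uniq_flatten_key nat _ (fun t => if t is Node l _ then leaves l else 0%N)).
- exact: iota_uniq.
- move=> i; apply: (@uniq_flatten_key tree _ (fun t => if t is Node l _ then l else Leaf)).
  + exact: reps_uniq.
  + by move=> l; rewrite map_inj_uniq ?filter_uniq ?reps_uniq // => a b [].
  + by move=> l x /mapP [r _ ->].
- by move=> i x /flatten_mapP [l /reps_leaves <- /mapP [r _ ->]].
Qed.

Lemma mem_candidates k n c :
  (c \in candidates k n) = [&& canonical c, leaves c == n & children_ok k c].
Proof.
apply/flatten_mapP/idP => [[i]|].
  rewrite mem_index_iota => i_range /flatten_mapP [l l_rep /mapP [r]].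
  rewrite mem_filter => /andP [lr r_rep] ->.
  move: l_rep r_rep; rewrite !mem_reps => /and3P [l_can /eqP l_i l_k].
  case/and3P => r_can /eqP r_ni r_k.
  by rewrite /= l_can r_can lr l_k r_k l_i r_ni; apply/eqP; lia.
case: c => [|l r] /and3P [] //= /and3P [l_can r_can lr] /eqP lr_n /andP [l_k r_k].
have := leaves_gt0 l; have := leaves_gt0 r => r_gt0 l_gt0.
exists (leaves l); first by rewrite mem_index_iota; lia.
apply/flatten_mapP; exists l; first by rewrite mem_reps l_can l_k eqxx.
apply/mapP; exists r => //; rewrite mem_filter lr mem_reps r_can r_k andbT /=.
by apply/eqP; lia.
Qed.

Lemma candidates_double k n : (0 < n)%N ->
  (2 * size (candidates k n) =
   \sum_(1 <= i < n) w i k * w (n - i) k + (if odd n then 0 else w n./2 k))%N.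
Proof.
move=> n_gt0.
have -> : size (candidates k n) = sorted_pairs (reps k) n.
  rewrite /candidates size_flatten_map; apply: eq_bigr => i _.
  rewrite size_flatten_map; apply: eq_bigr => l _.
  by rewrite size_map size_filter -sum1_count big_mkcond.
rewrite (sorted_pairs_double (@reps_uniq k) (@reps_leaves k)) //.
by congr (_ + _); [apply: eq_bigr => i _; rewrite !w_reps | rewrite w_reps].
Qed.

Fixpoint spine (m : nat) : tree :=
  if m is m'.+1 then Node Leaf (spine m') else Leaf.

Lemma leaves_spine m : leaves (spine m) = m.+1.
Proof. by elim: m => //= m ->. Qed.

Lemma caterpillar_spine m : caterpillar (spine m).
Proof. by elim: m. Qed.

Lemma canon_caterpillar t : caterpillar t -> canon t = canon (spine (leaves t).-1).
Proof.
elim: t => //= l IHl r IHr /and3P [/orP [] + cat_l cat_r].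
- case: l {IHl cat_l} => // _.
  by rewrite add1n -(prednK (leaves_gt0 r)) /= -IHr // prednK ?leaves_gt0.
- case: r {IHr cat_r} => // _.
  by rewrite addn1 -(prednK (leaves_gt0 l)) /= -IHl ?prednK ?leaves_gt0 // mkNodeC.
Qed.

Definition long_caterpillar (k : nat) (t : tree) : bool :=
  caterpillar t && (k < leaves t)%N.

Lemma gamma_Node_leq k l r : (gamma (Node l r) <= k)%N =
  children_ok k (Node l r) && ~~ long_caterpillar k (Node l r).
Proof.
rewrite gamma_Node !geq_max /long_caterpillar.
case: (caterpillar _) => /=; last by rewrite andbT.
by rewrite -leqNgt andbC.
Qed.

(* A long caterpillar whose children have gamma <= k has exactly k+1 leaves:
   one child is a leaf and the other a caterpillar with at most k leaves. *)
Lemma long_caterpillar_leaves k t :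
  children_ok k t -> long_caterpillar k t -> leaves t = k.+1.
Proof.
case: t => [|l r] //= /andP [l_k r_k] /andP [/and3P [/orP [] + cat_l cat_r] k_lt].
- case: l l_k {cat_l} k_lt => //= _ k_lt.
  by rewrite -(gamma_caterpillar cat_r) in k_lt *; lia.
- case: r r_k {cat_r} k_lt => //= _ k_lt.
  by rewrite -(gamma_caterpillar cat_l) in k_lt *; lia.
Qed.

(* The spine with k+1 leaves is a candidate: its children have at most k
   leaves. *)
Lemma children_ok_spine k : (1 <= k)%N -> children_ok k (canon (spine k)).
Proof.
case: k => // k _ /=.
have spine_k : (gamma (canon (spine k)) <= k.+1)%N.
  have [_ _ _ ->] := canon_invariants (spine k).
  by rewrite (leq_trans (gamma_le_leaves _)) // leaves_spine.
by case: (mkNode_cases Leaf (canon (spine k))) => -> /=; rewrite gamma_Leaf spine_k.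
Qed.

Lemma count_long_candidates k n : (1 <= k)%N ->
  count (long_caterpillar k) (candidates k n) = (n == k.+1).
Proof.
move=> k_ge1; have [spine_leaves _ spine_cat _] := canon_invariants (spine k).
have long_spine : {in candidates k n, long_caterpillar k =1 pred1 (canon (spine k))}.
  move=> c; rewrite mem_candidates => /and3P [c_can _ c_ok] /=.
  apply/idP/eqP => [c_long|->].
    rewrite -(canonicalK c_can) (canon_caterpillar (proj1 (andP c_long))).
    by rewrite (long_caterpillar_leaves c_ok c_long).
  by rewrite /long_caterpillar spine_cat caterpillar_spine spine_leaves leaves_spine ltnSn.
rewrite (eq_in_count long_spine) count_uniq_mem ?candidates_uniq // mem_candidates.
by rewrite canon_canonical children_ok_spine // andbT spine_leaves leaves_spine eq_sym.
Qed.

Lemma reps_candidates k n : (2 <= n)%N ->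
  perm_eq (reps k n) [seq c <- candidates k n | ~~ long_caterpillar k c].
Proof.
move=> n_ge2; apply: uniq_perm; rewrite ?filter_uniq ?reps_uniq ?candidates_uniq //.
move=> [|l r]; rewrite mem_filter mem_reps mem_candidates.
  have -> : (leaves Leaf == n) = false by apply/eqP => /= n1; rewrite -n1 in n_ge2.
  by rewrite !andbF.
by rewrite gamma_Node_leq; case: (~~ _); rewrite ?andbF ?andbT.
Qed.

Lemma w_recurrence k n : (1 <= k)%N -> (2 <= n)%N ->
  (2 * w n k + 2 * (n == k.+1) =
   \sum_(1 <= i < n) w i k * w (n - i) k + (if odd n then 0 else w n./2 k))%N.
Proof.
move=> k_ge1 n_ge2; rewrite -candidates_double 1?ltnW // -mulnDr.
rewrite w_reps (perm_size (reps_candidates k n_ge2)) size_filter.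
by rewrite -(count_long_candidates n k_ge1) addnC count_predC.
Qed.

Lemma w0 k : w 0 k = 0%N.
Proof. by []. Qed.

Lemma w1 k : (1 <= k)%N -> w 1 k = 1%N.
Proof. by move=> k_ge1; rewrite /w /trees_with_leaves /= gamma_Leaf k_ge1. Qed.

Import GRing.Theory.
Local Open Scope ring_scope.

Lemma fps_mul1l (f : fps) n : fps_mul fps_one f n = f n.
Proof.
rewrite /fps_mul big_ord_recl /fps_one /fps_Xn /= mul1r subn0 big1 ?addr0 // => i _.
by rewrite mul0r.
Qed.

Lemma fps_mul1r (f : fps) n : fps_mul f fps_one n = f n.
Proof.
rewrite /fps_mul big_ord_recr /fps_one /fps_Xn /= subnn mulr1 big1 ?add0r // => i _.
by rewrite subn_eq0 leqNgt ltn_ord mulr0.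
Qed.

Lemma fps_mulBl (f g h : fps) n :
  fps_mul (fps_sub f g) h n = fps_mul f h n - fps_mul g h n.
Proof. by rewrite /fps_mul -sumrB; apply: eq_bigr => i _; rewrite mulrBl. Qed.

Lemma fps_mulBr (f g h : fps) n :
  fps_mul f (fps_sub g h) n = fps_mul f g n - fps_mul f h n.
Proof. by rewrite /fps_mul -sumrB; apply: eq_bigr => i _; rewrite mulrBr. Qed.

Lemma quadratic_sqrt (f g : fps) : f 0%N = 0 ->
  (forall n, f n = g n + 2%:R^-1 * fps_mul f f n) ->
  is_fps_sqrt (fps_sub fps_one f) (fps_sub fps_one (fps_scale 2%:R g)).
Proof.
move=> f0 f_eq; split; first by rewrite /fps_sub f0 subr0.
move=> n; rewrite fps_mulBl !fps_mulBr !fps_mul1l fps_mul1r (f_eq n).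
by rewrite /fps_sub /fps_scale; lra.
Qed.

Lemma fps_mul_convolution (f g : fps) n : f 0%N = 0 -> g 0%N = 0 ->
  fps_mul f g n = \sum_(1 <= i < n) f i * g (n - i)%N.
Proof.
move=> f0 g0; case: n => [|n]; first by rewrite /fps_mul big_ord1 f0 mul0r big_geq.
rewrite /fps_mul -(big_mkord xpredT (fun i => f i * g (n.+1 - i)%N)).
by rewrite big_ltn // big_nat_recr //= f0 subnn g0 mul0r mulr0 add0r addr0.
Qed.

Lemma W_sqr_coef k n :
  fps_mul (W k) (W k) n = (\sum_(1 <= i < n) w i k * w (n - i) k)%N%:R.
Proof.
rewrite fps_mul_convolution ?/W ?w0 // natr_sum.
by apply: eq_bigr => i _; rewrite natrM.
Qed.

Lemma W_coef k n : (1 <= k)%N ->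
  W k n = (n == 1%N)%:R + 2%:R^-1 * fps_mul (W k) (W k) n
          + 2%:R^-1 * fps_x2 (W k) n - (n == k.+1)%:R.
Proof.
move=> k_ge1; rewrite W_sqr_coef /fps_x2 /W.
case: n => [|[|n]].
- by rewrite big_geq // w0 !mulr0 !addr0 subr0.
- have -> : (1 == k.+1) = false by apply/eqP => /succn_inj k0; rewrite -k0 in k_ge1.
  by rewrite big_geq // w1 // mulr0 mul0r !addr0 subr0.
have rec_rat : 2%:R * (w n.+2 k)%:R + 2%:R * (n.+2 == k.+1)%:R =
   (\sum_(1 <= i < n.+2) w i k * w (n.+2 - i) k)%N%:R +
   (if odd n.+2 then 0%N else w n.+2./2 k)%:R :> rat.
  by rewrite -!natrM -!natrD w_recurrence.
by move: rec_rat; case: ifP => _; rewrite ?add0r ?addr0 => rec_rat; lra.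
Qed.

(* The functional equation is [W_coef]; rearranged, it says that W_k solves
   the quadratic W = phi_k + W^2/2, whence the square-root formula. *)
Theorem mainTheorem12 (k : nat) (hk : (1 <= k)%N) :
  (forall n : nat,
     W k n =
     fps_sub (fps_add (fps_add (fps_Xn 1) (fps_scale (2%:R)^-1 (fps_mul (W k) (W k))))
                      (fps_scale (2%:R)^-1 (fps_x2 (W k))))
             (fps_Xn k.+1) n)
  /\ is_fps_sqrt (fps_sub fps_one (W k))
                 (fps_sub fps_one (fps_scale 2%:R (phi k))).
Proof.
split=> [n|]; first by rewrite (W_coef n hk).
apply: quadratic_sqrt => [|n]; first by rewrite /W w0.
by rewrite {1}(W_coef n hk) /phi /fps_sub /fps_add /fps_scale /fps_Xn; lra.
Qed.
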